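(* Let $\mu\colon X^3\to X$ be a coarse median on a metric space $(X,d)$ with parameters $k,h$, and let $L\ge0$. Then there exist $\beta,\gamma\ge0$, depending only on $L$, $k$ and $h$, such that for every $\mathrm{CAT}(0)$ cube complex $C$ and every $L$-quasi-morphism $f\colon(C^{(0)},\mu_{C^{(0)}})\to(X,\mu)$ the following hold. (i) For any two parallel edges $e_1,e_2$ of $C$ with endpoints $e_i^\pm$, we have $\frac1\beta d(f(e_1^+),f(e_1^-))-\gamma\le d(f(e_2^+),f(e_2^-))\le\beta\,d(f(e_1^+),f(e_1^-))+\gamma$. (ii) If $x_0,\dots,x_m\in C^{(0)}$ is a combinatorial geodesic in the $1$-skeleton $C^{(1)}$, then $d(f(x_i),f(x_{i+1}))\le\beta\,d(f(x_0),f(x_m))+\gamma$ for all $i\in\{0,\dots,m-1\}$.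
   Context: $\mu_{C^{(0)}}$ is the median operation on the vertex set $C^{(0)}$ given by the median of the path metric on the $1$-skeleton. Two edges of $C$ are parallel if they cross the same hyperplane (wall). A map $\phi\colon S\to X$ between sets with ternary operations $\mu_S,\mu_X$ is an $L$-quasi-morphism if $d(\phi(\mu_S(s_1,s_2,s_3)),\mu_X(\phi(s_1),\phi(s_2),\phi(s_3)))\le L$ for all $s_i$. A finite median algebra is identified with the vertex set of a finite $\mathrm{CAT}(0)$ cube complex with its median operation. A coarse median on $(X,d)$ with parameters $k\ge0$ and non-decreasing $h\colon\mathbb{N}\to\mathbb{R}_{\ge0}$ is $\mu\colon X^3\to X$ such that (i) $d(\mu(x,y,z),\mu(x',y',z'))\le k(d(x,x')+d(y,y')+d(z,z'))+h(0)$ for all points; (ii) for every finite non-empty $A\subseteq X$ there are a finite median algebra $M$, an $h(|A|)$-quasi-morphism $\lambda\colon M\to X$ and $\pi\colon A\to M$ with $d(a,\lambda(\pi(a)))\le h(|A|)$ for $a\in A$. *)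

From Stdlib Require Import Reals Lia List.
Open Scope R_scope.

Definition is_metric {X : Type} (d : X -> X -> R) : Prop :=
  (forall x y, 0 <= d x y) /\
  (forall x y, d x y = 0 <-> x = y) /\
  (forall x y, d x y = d y x) /\
  (forall x y z, d x z <= d x y + d y z).

Definition is_median_algebra {M : Type} (m : M -> M -> M -> M) : Prop :=
  (forall a b c, m a b c = m b a c) /\
  (forall a b c, m a b c = m a c b) /\
  (forall a b, m a a b = a) /\
  (forall a b c d e, m a b (m c d e) = m (m a b c) (m a b d) e).

Definition finite_type (M : Type) : Prop := exists l : list M, forall x, In x l.

Definition quasi_morphism {S X : Type} (muS : S -> S -> S -> S)
  (d : X -> X -> R) (muX : X -> X -> X -> X) (phi : S -> X) (L : R) : Prop :=
  forall s1 s2 s3, d (phi (muS s1 s2 s3)) (muX (phi s1) (phi s2) (phi s3)) <= L.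

Definition coarse_median {X : Type} (d : X -> X -> R) (mu : X -> X -> X -> X)
  (k : R) (h : nat -> R) : Prop :=
  (forall x y z x' y' z',
     d (mu x y z) (mu x' y' z') <= k * (d x x' + d y y' + d z z') + h 0%nat) /\
  (forall A : list X, A <> nil -> NoDup A ->
     exists (M : Type) (muM : M -> M -> M -> M),
       finite_type M /\ is_median_algebra muM /\
       exists (lam : M -> X) (pi : {a : X | In a A} -> M),
         quasi_morphism muM d mu lam (h (length A)) /\
         forall a : {a : X | In a A}, d (proj1_sig a) (lam (pi a)) <= h (length A)).

Definition walk_len {V : Type} (adj : V -> V -> Prop) (u v : V) (n : nat) : Prop :=
  exists p : nat -> V, p 0%nat = u /\ p n = v /\
    forall i, (i < n)%nat -> adj (p i) (p (S i)).

Definition gdist_is {V : Type} (adj : V -> V -> Prop) (u v : V) (n : nat) : Prop :=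
  walk_len adj u v n /\ forall k, walk_len adj u v k -> (n <= k)%nat.

Definition between {V : Type} (adj : V -> V -> Prop) (x y z : V) : Prop :=
  exists a b, gdist_is adj x z a /\ gdist_is adj z y b /\ gdist_is adj x y (a + b).

Definition is_graph_median {V : Type} (adj : V -> V -> Prop) (x y z m : V) : Prop :=
  between adj x y m /\ between adj y z m /\ between adj x z m.

(** 1-skeleton of a CAT(0) cube complex = median graph (Chepoi, Roller):
    simple, connected, every triple has a unique median. *)
Definition cat0_cube_skeleton {V : Type} (adj : V -> V -> Prop) : Prop :=
  (forall u v, adj u v -> adj v u) /\
  (forall u, ~ adj u u) /\
  (forall u v, exists n, walk_len adj u v n) /\
  (forall x y z, exists m, is_graph_median adj x y z m /\
     forall m', is_graph_median adj x y z m' -> m' = m).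

(** halfspace of the hyperplane dual to the edge (u,v) containing u *)
Definition halfspace {V : Type} (adj : V -> V -> Prop) (u v : V) (x : V) : Prop :=
  exists a b, gdist_is adj x u a /\ gdist_is adj x v b /\ (a < b)%nat.

(** edges u1v1 and u2v2 cross the same hyperplane (same pair of halfspaces) *)
Definition parallel_edges {V : Type} (adj : V -> V -> Prop) (u1 v1 u2 v2 : V) : Prop :=
  adj u1 v1 /\ adj u2 v2 /\
  ((forall x, (halfspace adj u1 v1 x <-> halfspace adj u2 v2 x) /\
              (halfspace adj v1 u1 x <-> halfspace adj v2 u2 x)) \/
   (forall x, (halfspace adj u1 v1 x <-> halfspace adj v2 u2 x) /\
              (halfspace adj v1 u1 x <-> halfspace adj u2 v2 x))).

Definition cube_quasi_morphism {V X : Type} (adj : V -> V -> Prop)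
  (d : X -> X -> R) (mu : X -> X -> X -> X) (f : V -> X) (L : R) : Prop :=
  forall a b c m, is_graph_median adj a b c m ->
    d (f m) (mu (f a) (f b) (f c)) <= L.

Definition comb_geodesic {V : Type} (adj : V -> V -> Prop) (x : nat -> V) (m : nat) : Prop :=
  (forall i, (i < m)%nat -> adj (x i) (x (S i))) /\ gdist_is adj (x 0%nat) (x m) m.

(** If a vertex [w] lies in the halfspace of [u] for the hyperplane dual to
    an edge [uv], then [u] is the median of [u], [v], [w]. So for parallel
    edges [u1 v1] and [u2 v2], a quasi-morphism [f] sends [u1] and [v1] close
    to [mu (f u1) (f v1) (f u2)] and [mu (f u1) (f v1) (f v2)], whose distance
    is at most [k * d (f u2) (f v2)] up to a constant by the coarse Lipschitz
    property. Likewise every vertex [x j] of a geodesic from [x 0] to [x m] is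
    the median of [x 0], [x m], [x j], and a coarse median satisfies
    [d (mu a b c) a <= k * d a b] up to a constant, so [f (x j)] stays within
    [k * d (f (x 0)) (f (x m))] of [f (x 0)] up to a constant. *)
From Stdlib Require Import Reals List Lra Lia Classical.
Open Scope R_scope.

Section Median_graphs.

Variables (V : Type) (adj : V -> V -> Prop).
Hypothesis adj_sym : forall u v, adj u v -> adj v u.
Hypothesis adj_irrefl : forall u, ~ adj u u.

Lemma walk_len_rev u v n : walk_len adj u v n -> walk_len adj v u n.
Proof.
  intros [p [Hp0 [Hpn Hstep]]]. exists (fun i => p (n - i)%nat).
  split; [rewrite Nat.sub_0_r; auto|]. split; [rewrite Nat.sub_diag; auto|].
  intros i Hi. apply adj_sym. replace (n - i)%nat with (S (n - S i)) by lia.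
  apply Hstep. lia.
Qed.

Lemma walk_len0_eq u v : walk_len adj u v 0 -> u = v.
Proof. intros [p [Hp0 [Hpn _]]]. congruence. Qed.

Lemma walk_len_cat u v w n m :
  walk_len adj u v n -> walk_len adj v w m -> walk_len adj u w (n + m).
Proof.
  intros [p [Hp0 [Hpn Hp]]] [q [Hq0 [Hqm Hq]]].
  exists (fun i => if Nat.leb i n then p i else q (i - n)%nat).
  split; [simpl; auto|]. split.
  - destruct (Nat.leb_spec (n + m) n).
    + assert (m = 0%nat) by lia. subst m. rewrite Nat.add_0_r. congruence.
    + replace (n + m - n)%nat with m by lia. auto.
  - intros i Hi. destruct (Nat.leb_spec i n); destruct (Nat.leb_spec (S i) n).
    + apply Hp. lia.
    + replace i with n by lia. rewrite Hpn, <- Hq0.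
      replace (S n - n)%nat with 1%nat by lia. apply Hq. lia.
    + lia.
    + replace (S i - n)%nat with (S (i - n)) by lia. apply Hq. lia.
Qed.

Lemma walk_len_segment (x : nat -> V) (m : nat) :
  (forall i, (i < m)%nat -> adj (x i) (x (S i))) ->
  forall i j, (i <= j <= m)%nat -> walk_len adj (x i) (x j) (j - i).
Proof.
  intros Hstep i j Hij. exists (fun t => x (i + t)%nat).
  split; [rewrite Nat.add_0_r; auto|]. split; [f_equal; lia|].
  intros t Ht. replace (i + S t)%nat with (S (i + t)) by lia. apply Hstep. lia.
Qed.

Lemma gdist_sym u v n : gdist_is adj u v n -> gdist_is adj v u n.
Proof.
  intros [Hwalk Hmin]. split; [apply walk_len_rev; auto|].
  intros k Hk. apply Hmin, walk_len_rev, Hk.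
Qed.

Lemma gdist_refl u : gdist_is adj u u 0.
Proof. split; [exists (fun _ => u); repeat split; intros; lia | intros; lia]. Qed.

Lemma gdist_adj u v : adj u v -> gdist_is adj u v 1.
Proof.
  intros Huv. split.
  - exists (fun i => match i with 0%nat => u | _ => v end). repeat split.
    intros i Hi. replace i with 0%nat by lia. auto.
  - intros [|k] Hk; [|lia]. apply walk_len0_eq in Hk. subst. now destruct (adj_irrefl v).
Qed.

Lemma halfspace_self u v : adj u v -> halfspace adj u v u.
Proof.
  intros Huv. exists 0%nat, 1%nat.
  split; [apply gdist_refl | split; [apply gdist_adj; auto | lia]].
Qed.

Lemma halfspace_median u v w : adj u v -> halfspace adj u v w ->
  is_graph_median adj u v w u /\ is_graph_median adj v u w u.
Proof.
  intros Huv [p [q [Hwu [Hwv Hpq]]]].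
  assert (Huv1 : gdist_is adj u v 1) by (apply gdist_adj; auto).
  assert (Hvu1 : gdist_is adj v u 1) by (apply gdist_adj; auto).
  (* [q <= p + 1] via [w -> u -> v], and [p < q], so [w -> u -> v] is geodesic. *)
  assert (q <= p + 1)%nat by exact (proj2 Hwv _ (walk_len_cat _ _ _ _ _ (proj1 Hwu) (proj1 Huv1))).
  replace q with (S p) in * by lia.
  assert (Huw : gdist_is adj u w p) by (apply gdist_sym; auto).
  assert (Hvw : gdist_is adj v w (S p)) by (apply gdist_sym; auto).
  assert (between adj u v u) by (exists 0%nat, 1%nat; auto using gdist_refl).
  assert (between adj v w u) by (exists 1%nat, p; auto).
  assert (between adj u w u) by (exists 0%nat, p; auto using gdist_refl).
  assert (between adj v u u) by (exists 1%nat, 0%nat; rewrite Nat.add_0_r; auto using gdist_refl).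
  split; repeat split; auto.
Qed.

Lemma geodesic_vertex_median (x : nat -> V) (m : nat) : comb_geodesic adj x m ->
  forall j, (j <= m)%nat -> is_graph_median adj (x 0%nat) (x m) (x j) (x j).
Proof.
  intros [Hstep [Hwalk Hmin]] j Hj.
  assert (Hfirst : gdist_is adj (x 0%nat) (x j) j).
  { split.
    - rewrite <- (Nat.sub_0_r j) at 2. apply walk_len_segment with m; auto; lia.
    - intros k Hk.
      enough (m <= k + (m - j))%nat by lia.
      apply Hmin, walk_len_cat with (x j); auto.
      apply walk_len_segment with m; auto; lia. }
  assert (Hlast : gdist_is adj (x j) (x m) (m - j)).
  { split.
    - apply walk_len_segment with m; auto; lia.
    - intros k Hk. enough (m <= j + k)%nat by lia.
      apply Hmin, walk_len_cat with (x j); auto. apply Hfirst. }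
  split; [|split].
  - exists j, (m - j)%nat. replace (j + (m - j))%nat with m by lia.
    split; [exact Hfirst | split; [exact Hlast | split; assumption]].
  - exists (m - j)%nat, 0%nat. rewrite Nat.add_0_r.
    split; [apply gdist_sym, Hlast | split; [apply gdist_refl | apply gdist_sym, Hlast]].
  - exists j, 0%nat. rewrite Nat.add_0_r.
    split; [exact Hfirst | split; [apply gdist_refl | exact Hfirst]].
Qed.

Lemma parallel_edges_sym u1 v1 u2 v2 :
  parallel_edges adj u1 v1 u2 v2 -> parallel_edges adj u2 v2 u1 v1.
Proof.
  intros [Huv1 [Huv2 [Hc | Hc]]]; split; auto; split; auto;
    [left | right]; intros y; specialize (Hc y); tauto.
Qed.

End Median_graphs.

Section Coarse_medians.

Variables (X : Type) (d : X -> X -> R) (mu : X -> X -> X -> X) (k : R) (h : nat -> R).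
Hypothesis d_metric : is_metric d.
Hypothesis mu_coarse : coarse_median d mu k h.
Hypothesis k_ge0 : 0 <= k.
Hypothesis h_mono : forall n m : nat, (n <= m)%nat -> h n <= h m.

Lemma coarse_median_lipschitz x y z x' y' z' :
  d (mu x y z) (mu x' y' z') <= k * (d x x' + d y y' + d z z') + h 0%nat.
Proof. apply mu_coarse. Qed.

Lemma quasi_morphism_mono {M : Type} (muM : M -> M -> M -> M) (lam : M -> X) L L' :
  L <= L' -> quasi_morphism muM d mu lam L -> quasi_morphism muM d mu lam L'.
Proof. intros HL Hq s1 s2 s3. specialize (Hq s1 s2 s3). lra. Qed.

(* [a :: c :: nil] is duplicate-free only if [a <> c]; otherwise use [a :: nil]
   and the monotonicity of [h]. *)
Lemma coarse_median_pair_model a c :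
  exists (M : Type) (muM : M -> M -> M -> M) (lam : M -> X) (pa pc : M),
    muM pa pa pc = pa /\ quasi_morphism muM d mu lam (h 2%nat) /\
    d a (lam pa) <= h 2%nat /\ d c (lam pc) <= h 2%nat.
Proof.
  destruct (classic (a = c)) as [<- | Hac].
  - destruct (proj2 mu_coarse (a :: nil)) as [M [muM [_ [Hmed [lam [pi [Hqm Happ]]]]]]].
    + discriminate.
    + repeat constructor. simpl; tauto.
    + pose (sa := exist (fun x => In x (a :: nil)) a (or_introl eq_refl)).
      assert (Ha : d a (lam (pi sa)) <= h 2%nat).
      { pose proof (Happ sa). pose proof (h_mono 1 2 ltac:(lia)). simpl in *. lra. }
      exists M, muM, lam, (pi sa), (pi sa). split; [apply Hmed|].
      split; [|auto]. apply quasi_morphism_mono with (h 1%nat); auto.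
  - destruct (proj2 mu_coarse (a :: c :: nil)) as [M [muM [_ [Hmed [lam [pi [Hqm Happ]]]]]]].
    + discriminate.
    + repeat constructor; simpl; intuition.
    + exists M, muM, lam, (pi (exist _ a (or_introl eq_refl))),
        (pi (exist _ c (or_intror (or_introl eq_refl)))).
      split; [apply Hmed|]. split; [exact Hqm|].
      split; [exact (Happ (exist _ a _)) | exact (Happ (exist _ c _))].
Qed.

Definition aac_const : R := 2 * h 2%nat + 3 * k * h 2%nat + h 0%nat.

Lemma coarse_median_aac a c : d a (mu a a c) <= aac_const.
Proof.
  destruct d_metric as [_ [_ [Hsym Htri]]].
  destruct (coarse_median_pair_model a c) as [M [muM [lam [pa [pc [Hid [Hqm [Ha Hc]]]]]]]].
  pose proof (Hqm pa pa pc) as Hq. rewrite Hid in Hq.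
  pose proof (coarse_median_lipschitz (lam pa) (lam pa) (lam pc) a a c) as Hlip.
  rewrite (Hsym (lam pa) a), (Hsym (lam pc) c) in Hlip.
  assert (k * (d a (lam pa) + d a (lam pa) + d c (lam pc)) <= k * (3 * h 2%nat))
    by (apply Rmult_le_compat_l; lra).
  pose proof (Htri a (lam pa) (mu a a c)).
  pose proof (Htri (lam pa) (mu (lam pa) (lam pa) (lam pc)) (mu a a c)).
  unfold aac_const. lra.
Qed.

Lemma coarse_median_near_first a b c :
  d (mu a b c) a <= k * d a b + h 0%nat + aac_const.
Proof.
  pose proof (coarse_median_aac a c).
  destruct d_metric as [_ [Hzero [Hsym Htri]]].
  pose proof (coarse_median_lipschitz a b c a a c) as Hlip.
  rewrite (proj2 (Hzero a a) eq_refl), (proj2 (Hzero c c) eq_refl), (Hsym b a) in Hlip.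
  pose proof (Htri (mu a b c) (mu a a c) a). rewrite (Hsym (mu a a c) a) in *.
  lra.
Qed.

End Coarse_medians.

Section Quasi_morphisms.

Variables (X : Type) (d : X -> X -> R) (mu : X -> X -> X -> X) (k : R) (h : nat -> R).
Hypothesis d_metric : is_metric d.
Hypothesis mu_coarse : coarse_median d mu k h.
Hypothesis k_ge0 : 0 <= k.
Hypothesis h_mono : forall n m : nat, (n <= m)%nat -> h n <= h m.

Variables (V : Type) (adj : V -> V -> Prop) (f : V -> X) (L : R).
Hypothesis adj_sym : forall u v, adj u v -> adj v u.
Hypothesis adj_irrefl : forall u, ~ adj u u.
Hypothesis f_quasi : cube_quasi_morphism adj d mu f L.

Lemma edge_length_le_across u1 v1 u2 v2 : adj u1 v1 ->
  halfspace adj u1 v1 u2 -> halfspace adj v1 u1 v2 ->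
  d (f u1) (f v1) <= k * d (f u2) (f v2) + (2 * L + h 0%nat).
Proof.
  intros Huv Hu2 Hv2.
  destruct d_metric as [_ [Hzero [Hsym Htri]]].
  pose proof (f_quasi _ _ _ _ (proj1 (halfspace_median V adj adj_sym adj_irrefl _ _ _ Huv Hu2))) as Hu1.
  pose proof (f_quasi _ _ _ _
    (proj2 (halfspace_median V adj adj_sym adj_irrefl _ _ _ (adj_sym _ _ Huv) Hv2))) as Hv1.
  pose proof (coarse_median_lipschitz X d mu k h mu_coarse (f u1) (f v1) (f u2) (f u1) (f v1) (f v2))
    as Hlip.
  rewrite (proj2 (Hzero (f u1) (f u1)) eq_refl), (proj2 (Hzero (f v1) (f v1)) eq_refl) in Hlip.
  pose proof (Htri (f u1) (mu (f u1) (f v1) (f u2)) (f v1)).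
  pose proof (Htri (mu (f u1) (f v1) (f u2)) (mu (f u1) (f v1) (f v2)) (f v1)).
  rewrite (Hsym (mu (f u1) (f v1) (f v2)) (f v1)) in *.
  lra.
Qed.

Lemma parallel_edges_length_le u1 v1 u2 v2 : parallel_edges adj u1 v1 u2 v2 ->
  d (f u2) (f v2) <= k * d (f u1) (f v1) + (2 * L + h 0%nat).
Proof.
  intros [Huv1 [Huv2 [Hsame | Hswap]]].
  - apply edge_length_le_across; auto.
    + apply Hsame, halfspace_self; auto.
    + apply Hsame, halfspace_self; auto.
  - rewrite (proj1 (proj2 (proj2 d_metric))).
    apply edge_length_le_across; auto.
    + apply Hswap, halfspace_self; auto.
    + apply Hswap, halfspace_self; auto.
Qed.

Lemma geodesic_vertex_near_start (x : nat -> V) (m : nat) : comb_geodesic adj x m ->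
  forall j, (j <= m)%nat ->
  d (f (x j)) (f (x 0%nat)) <= k * d (f (x 0%nat)) (f (x m)) + (L + h 0%nat + aac_const k h).
Proof.
  intros Hgeo j Hj.
  pose proof (f_quasi _ _ _ _ (geodesic_vertex_median V adj adj_sym x m Hgeo j Hj)).
  pose proof (coarse_median_near_first X d mu k h d_metric mu_coarse k_ge0 h_mono
    (f (x 0%nat)) (f (x m)) (f (x j))).
  pose proof (proj2 (proj2 (proj2 d_metric)) (f (x j))
    (mu (f (x 0%nat)) (f (x m)) (f (x j))) (f (x 0%nat))).
  lra.
Qed.

Lemma geodesic_step_le (x : nat -> V) (m : nat) : comb_geodesic adj x m ->
  forall i, (i < m)%nat ->
  d (f (x i)) (f (x (S i))) <=
    2 * k * d (f (x 0%nat)) (f (x m)) + 2 * (L + h 0%nat + aac_const k h).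
Proof.
  intros Hgeo i Hi.
  destruct d_metric as [_ [_ [Hsym Htri]]].
  pose proof (geodesic_vertex_near_start x m Hgeo i ltac:(lia)).
  pose proof (geodesic_vertex_near_start x m Hgeo (S i) ltac:(lia)).
  pose proof (Htri (f (x i)) (f (x 0%nat)) (f (x (S i)))).
  rewrite (Hsym (f (x 0%nat)) (f (x (S i)))) in *.
  lra.
Qed.

End Quasi_morphisms.

Lemma lower_bound_of_upper_bound beta gamma a b :
  1 <= beta -> 0 <= gamma -> a <= beta * b + gamma -> 1 / beta * a - gamma <= b.
Proof.
  intros Hbeta Hgamma Hab.
  assert (Hinv : 0 < 1 / beta <= 1).
  { split; [apply Rdiv_lt_0_compat; lra|].
    apply Rmult_le_reg_r with beta; [lra|]. field_simplify; lra. }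
  assert (1 / beta * a <= b + 1 / beta * gamma).
  { replace b with (1 / beta * (beta * b)) by (field; lra).
    rewrite <- Rmult_plus_distr_l. apply Rmult_le_compat_l; lra. }
  nra.
Qed.

Theorem lemma6p1 :
  forall (k : R) (h : nat -> R) (L : R),
    0 <= k ->
    (forall n, 0 <= h n) ->
    (forall n m : nat, (n <= m)%nat -> h n <= h m) ->
    0 <= L ->
    exists beta gamma : R, 0 < beta /\ 0 <= gamma /\
      forall (X : Type) (d : X -> X -> R) (mu : X -> X -> X -> X),
        is_metric d -> coarse_median d mu k h ->
        forall (V : Type) (adj : V -> V -> Prop),
          cat0_cube_skeleton adj ->
          forall f : V -> X, cube_quasi_morphism adj d mu f L ->
            (forall e1p e1m e2p e2m : V,
               parallel_edges adj e1p e1m e2p e2m ->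
               (1 / beta) * d (f e1p) (f e1m) - gamma <= d (f e2p) (f e2m) /\
               d (f e2p) (f e2m) <= beta * d (f e1p) (f e1m) + gamma) /\
            (forall (x : nat -> V) (m : nat),
               comb_geodesic adj x m ->
               forall i : nat, (i < m)%nat ->
                 d (f (x i)) (f (x (S i))) <= beta * d (f (x 0%nat)) (f (x m)) + gamma).
Proof.
  intros k h L Hk Hh Hmono HL.
  assert (Haac : 0 <= aac_const k h).
  { unfold aac_const. pose proof (Hh 0%nat). pose proof (Hh 2%nat).
    pose proof (Rmult_le_pos k (h 2%nat) Hk (Hh 2%nat)). lra. }
  pose proof (Hh 0%nat).
  exists (2 * k + 1), (2 * (L + h 0%nat + aac_const k h)).
  split; [lra|]. split; [lra|].
  intros X d mu Hd Hmu V adj [Hsym [Hirr _]] f Hf.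
  assert (Hpos : forall x y, 0 <= d x y) by apply Hd.
  split.
  - intros u1 v1 u2 v2 Hpar.
    pose proof (parallel_edges_sym V adj _ _ _ _ Hpar) as Hpar'.
    pose proof (parallel_edges_length_le X d mu k h Hd Hmu V adj f L Hsym Hirr Hf _ _ _ _ Hpar).
    pose proof (parallel_edges_length_le X d mu k h Hd Hmu V adj f L Hsym Hirr Hf _ _ _ _ Hpar').
    pose proof (Hpos (f u1) (f v1)). pose proof (Hpos (f u2) (f v2)).
    split; [apply lower_bound_of_upper_bound|]; nra.
  - intros x m Hgeo i Hi.
    pose proof (geodesic_step_le X d mu k h Hd Hmu Hk Hmono V adj f L Hsym Hf x m Hgeo i Hi).
    pose proof (Hpos (f (x 0%nat)) (f (x m))).
    nra.
Qed.
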